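(* Let $\boldsymbol{\omega}\in\mathbb{R}^d$ satisfy $|\boldsymbol{\omega}\cdot\boldsymbol{\nu}|>\gamma_0|\boldsymbol{\nu}|^{-\tau}$ for all $\boldsymbol{\nu}\in\mathbb{Z}^d\setminus\{\boldsymbol{0}\}$, with $\gamma_0>0$, $\tau>d-1$, and let $\gamma$ be a constant with $0<\gamma<\min\big\{|\omega_1|,\ldots,|\omega_d|,\ \min_{1\le i<j\le d}\big||\omega_i|-|\omega_j|\big|\big\}$. Let $p\ge2$, $\boldsymbol{\nu}_1,\ldots,\boldsymbol{\nu}_p\in\mathbb{Z}^d$ and $j_1,\ldots,j_p\in\{1,\ldots,d\}$ be such that $|\boldsymbol{\nu}_i-\boldsymbol{\nu}_{i-1}|\le2$ and $\delta_{j_i}(\boldsymbol{\omega}\cdot\boldsymbol{\nu}_i)=\delta_{j_1}(\boldsymbol{\omega}\cdot\boldsymbol{\nu}_1)\le\gamma$ for $i=2,\ldots,p$. Then $|\boldsymbol{\nu}_1-\boldsymbol{\nu}_p|\le2$.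
   Context: $|\boldsymbol{\nu}|=|\nu_1|+\cdots+|\nu_d|$; $\boldsymbol{e}_j$ is the $j$-th standard basis vector. For $j\in\{1,\ldots,d\}$ and $\boldsymbol{\nu}\in\mathbb{Z}^d$, $\delta_j(\boldsymbol{\omega}\cdot\boldsymbol{\nu}):=\min\{|\boldsymbol{\omega}\cdot\boldsymbol{\nu}-\omega_j|,|\boldsymbol{\omega}\cdot\boldsymbol{\nu}+\omega_j|\}$. *)

From HB Require Import structures.
From mathcomp Require Import all_boot all_order all_algebra.
From mathcomp Require Import all_classical all_reals all_analysis.
Set Implicit Arguments. Unset Strict Implicit. Unset Printing Implicit Defensive.
Import Order.TTheory GRing.Theory Num.Theory.
Local Open Scope ring_scope.

(* Vectors of R^d and Z^d are functions on the index set 'I_d = {0,...,d-1}. *)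

Definition norm1 (d : nat) (nu : 'I_d -> int) : nat := (\sum_(k < d) `|nu k|)%N.

Definition dotZ (R : realType) (d : nat) (om : 'I_d -> R) (nu : 'I_d -> int) : R :=
  \sum_(k < d) om k * (nu k)%:~R.

Definition delta (R : realType) (d : nat) (om : 'I_d -> R) (j : 'I_d) (x : R) : R :=
  Num.min `|x - om j| `|x + om j|.

Definition subZ (d : nat) (nu1 nu2 : 'I_d -> int) : 'I_d -> int :=
  fun k => nu1 k - nu2 k.

(* Write delta_{j_i}(om.nu_i) = |om.c_i| with c_i = nu_i - s_i e_{j_i} for a sign
   s_i.  All the |om.c_i| are equal, so by the Diophantine condition (om.w = 0 forces
   w = 0) each c_i is c_1 or -c_1.  If two consecutive ones were opposite, then
   2 c_1 = (s_{i+1} e_{j_{i+1}} - s_i e_{j_i}) - (nu_{i+1} - nu_i) would have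
   l1-norm at most 4; but a nonzero vector of l1-norm at most 2 is one of
   +-e_k, +-2e_k, +-e_k +- e_l, and the choice of gamma gives each of them
   |om.c| > gamma >= |om.c_1|.  Hence c_1 = c_p and
   nu_1 - nu_p = s_1 e_{j_1} - s_p e_{j_p}. *)

From HB Require Import structures.
From mathcomp Require Import all_boot all_order all_algebra.
From mathcomp Require Import all_classical all_reals all_analysis.
From mathcomp Require Import zify ring.

Set Implicit Arguments. Unset Strict Implicit. Unset Printing Implicit Defensive.
Import Order.TTheory GRing.Theory Num.Theory.
Local Open Scope ring_scope.

Definition basisZ (d : nat) (s : int) (j : 'I_d) : 'I_d -> int :=
  fun k => if k == j then s else 0.

Section Norm1.
Variable d : nat.
Implicit Types u v : 'I_d -> int.

Lemma norm1_basisZ s (j : 'I_d) : norm1 (basisZ s j) = `|s|%N.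
Proof.
rewrite /norm1 (bigD1 j) //= big1 => [|k /negbTE]; rewrite /basisZ.
  by rewrite eqxx addn0.
by move=> ->.
Qed.

Lemma norm1D_le u v : (norm1 (u + v)%R <= norm1 u + norm1 v)%N.
Proof.
by rewrite /norm1 -big_split /=; apply: leq_sum => k _; rewrite addrfctE /=; lia.
Qed.

Lemma norm1N u : norm1 (- u) = norm1 u.
Proof. by apply: eq_bigr => k _; rewrite /= abszN. Qed.

Lemma norm1B_le u v : (norm1 (u - v)%R <= norm1 u + norm1 v)%N.
Proof. by rewrite -(norm1N v) norm1D_le. Qed.

Lemma norm1Mn u n : norm1 (u *+ n) = (norm1 u * n)%N.
Proof.
rewrite /norm1 natmulfctE big_distrl /=; apply: eq_bigr => k _.
by rewrite -mulr_natr abszM natz.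
Qed.

End Norm1.

Section DotProduct.
Variables (R : realType) (d : nat) (om : 'I_d -> R).

Lemma dotZ_is_zmod_morphism : zmod_morphism (dotZ om).
Proof.
move=> u v; rewrite /dotZ -sumrB; apply: eq_bigr => k _.
by rewrite /= intrB mulrBr.
Qed.

HB.instance Definition _ :=
  GRing.isZmodMorphism.Build ('I_d -> int) R (dotZ om) dotZ_is_zmod_morphism.

Lemma dotZ_basisZ s j : dotZ om (basisZ s j) = om j * s%:~R.
Proof.
rewrite /dotZ (bigD1 j) //= big1 => [|k /negbTE]; rewrite /basisZ.
  by rewrite eqxx addr0.
by move=> ->; rewrite mulr0.
Qed.

End DotProduct.

Definition delta_sign (R : realType) (d : nat) (om : 'I_d -> R) (j : 'I_d) (x : R)
  : int :=
  if `|x - om j| <= `|x + om j| then 1 else -1.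

Lemma deltaE (R : realType) d (om : 'I_d -> R) j x :
  delta om j x = `|x - om j * (delta_sign om j x)%:~R|.
Proof.
by rewrite /delta /delta_sign minEle; case: ifP; rewrite ?mulr1 ?mulrN1 ?opprK.
Qed.

Lemma absz_delta_sign (R : realType) d (om : 'I_d -> R) j x :
  `|delta_sign om j x|%N = 1%N.
Proof. by rewrite /delta_sign; case: ifP. Qed.

Lemma normr_intr (R : numDomainType) (m : int) : `|m%:~R : R| = (`|m|%N)%:R.
Proof. by rewrite -intr_norm -abszE. Qed.

Section Diophantine.
Variables (R : realType) (d : nat) (om : 'I_d -> R) (gamma0 tau : R).
Hypothesis gamma0_gt0 : 0 < gamma0.
Hypothesis diophantine : forall nu : 'I_d -> int, (exists k, nu k != 0) ->
  gamma0 * (norm1 nu)%:R `^ (- tau) < `|dotZ om nu|.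

Lemma dotZ_eq0 w : dotZ om w = 0 -> w = 0.
Proof.
move=> w0; apply/funext => k; apply/eqP/negPn/negP => wk.
have := diophantine (ex_intro (fun k => w k != 0) k wk); rewrite w0 normr0 ltNge.
by rewrite mulr_ge0 ?powR_ge0 ?ltW.
Qed.

Lemma eq_norm_dotZ u v : `|dotZ om u| = `|dotZ om v| -> u = v \/ u = - v.
Proof.
move/eqP; rewrite eqr_norm2 => /orP[] /eqP uv; [left | right];
  by apply/subr0_eq/dotZ_eq0; rewrite raddfB ?raddfN /= uv subrr.
Qed.

End Diophantine.

Section SmallSums.
Variables (R : realType) (d : nat) (om : 'I_d -> R).

Lemma big_dotZ_eq0 (P : pred 'I_d) (c : 'I_d -> int) :
  (\sum_(m | P m) `|c m|)%N = 0%N ->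
  \sum_(m | P m) om m * (c m)%:~R = 0.
Proof.
move/eqP; rewrite sum_nat_eq0 => /forallP c0.
by apply: big1 => m Pm; move: (c0 m); rewrite Pm absz_eq0 => /eqP ->; rewrite mulr0.
Qed.

Lemma big_dotZ_absz_le1 (P : pred 'I_d) (c : 'I_d -> int) :
  (\sum_(m | P m) `|c m| <= 1)%N ->
  \sum_(m | P m) om m * (c m)%:~R = 0 \/
  exists2 l, P l & `|\sum_(m | P m) om m * (c m)%:~R| = `|om l|.
Proof.
move=> cle1.
have [l /andP[Pl cl] | c0] := pickP (fun m => P m && (c m != 0)); last first.
  left; apply: big1 => m Pm.
  by move: (c0 m); rewrite Pm => /negbFE/eqP ->; rewrite mulr0.
right; exists l => //.
move: cle1 cl; rewrite (bigD1 l) //= -absz_gt0.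
set N := (\sum_(m | _) _)%N => cle1 cl.
have [rest0 cl1] : N = 0%N /\ `|c l|%N = 1%N by lia.
by rewrite (bigD1 l) //= (big_dotZ_eq0 rest0) addr0 normrM normr_intr cl1 mulr1.
Qed.

End SmallSums.

Section Gap.
Variables (R : realType) (d : nat) (om : 'I_d -> R) (gamma : R).
Hypothesis om_gt : forall i, gamma < `|om i|.
Hypothesis om_gap : forall i l, i != l -> gamma < `| `|om i| - `|om l| |.

Lemma norm1_le2_dotZ_eq0 c : (norm1 c <= 2)%N -> `|dotZ om c| <= gamma -> c = 0.
Proof.
move=> c2 small; apply/funext => k; apply/eqP/negPn/negP => ck.
move: small; apply/negP; rewrite -ltNge.
move: c2 ck; rewrite /norm1 /dotZ (bigD1 k) //= (bigD1 k (P := xpredT)) //= -absz_gt0.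
set N := (\sum_(m | _) _)%N => c2 ck.
have omk := om_gt k.
have [ck2 | ck1] := leqP 2 `|c k|.
  have rest0 : N = 0%N by lia.
  rewrite (big_dotZ_eq0 om rest0) addr0 normrM normr_intr.
  apply: (lt_le_trans omk); rewrite ler_peMr ?normr_ge0 // ler1n; lia.
have ck_unit : `|om k * (c k)%:~R| = `|om k|.
  by rewrite normrM normr_intr (_ : `|c k|%N = 1%N) ?mulr1 //; lia.
have N_le1 : (N <= 1)%N by lia.
have [->|[l lk omlE]] := big_dotZ_absz_le1 om N_le1.
  by rewrite addr0 ck_unit.
have kl : k != l by rewrite eq_sym.
apply: lt_le_trans (om_gap kl) _.
by rewrite -ck_unit -omlE ler_dist_normD.
Qed.

Lemma antipodal_step_eq0 (v w b b' c : 'I_d -> int) :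
  (norm1 b <= 1)%N -> (norm1 b' <= 1)%N -> (norm1 (w - v)%R <= 2)%N ->
  v - b = c -> w - b' = - c -> `|dotZ om c| <= gamma -> c = 0.
Proof.
move=> b1 b'1 wv2 vE wE small; apply: norm1_le2_dotZ_eq0 small.
have vE' : v = b + c by rewrite -vE; ring.
have wE' : w = b' + - c by rewrite -wE; ring.
have c2E : c *+ 2 = (b' - b) - (w - v) by rewrite vE' wE'; ring.
have := norm1B_le (b' - b) (w - v); have := norm1B_le b' b.
rewrite -c2E norm1Mn; lia.
Qed.

End Gap.

Section Chain.
Variables (R : realType) (d : nat) (om : 'I_d -> R) (gamma0 tau gamma : R).
Hypothesis gamma0_gt0 : 0 < gamma0.
Hypothesis diophantine : forall nu : 'I_d -> int, (exists k, nu k != 0) ->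
  gamma0 * (norm1 nu)%:R `^ (- tau) < `|dotZ om nu|.
Hypothesis om_gt : forall i, gamma < `|om i|.
Hypothesis om_gap : forall i l, i != l -> gamma < `| `|om i| - `|om l| |.
Variables (p : nat) (nu b : nat -> 'I_d -> int) (dl : R).
Hypothesis norm1_b : forall i, (norm1 (b i) <= 1)%N.
Hypothesis step : forall i, (2 <= i <= p)%N -> (norm1 (nu i - nu i.-1)%R <= 2)%N.
Hypothesis dotZ_shift : forall i, (1 <= i <= p)%N -> `|dotZ om (nu i - b i)| = dl.
Hypothesis dl_le : dl <= gamma.

Lemma shift_const i : (1 <= i <= p)%N -> nu i - b i = nu 1%N - b 1%N.
Proof.
elim: i => [// | i IH] /andP[_ ip].
have [-> // | i_pos] := posnP i.
have p_pos : (0 < p)%N := ltn_trans i_pos ip.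
have shift_i : nu i - b i = nu 1%N - b 1%N by apply: IH; rewrite i_pos ltnW.
have norm_eq : `|dotZ om (nu i.+1 - b i.+1)| = `|dotZ om (nu 1%N - b 1%N)|.
  by rewrite !dotZ_shift.
have [// | opp] := eq_norm_dotZ gamma0_gt0 diophantine norm_eq.
suff shift1_0 : nu 1%N - b 1%N = 0 by rewrite opp shift1_0 oppr0.
have step_i : (norm1 (nu i.+1 - nu i)%R <= 2)%N by apply: step; rewrite ltnS i_pos.
apply: (antipodal_step_eq0 om_gt om_gap (norm1_b i) (norm1_b i.+1) step_i shift_i opp).
by rewrite dotZ_shift.
Qed.

Lemma chain_ends_close : (0 < p)%N -> (norm1 (nu 1%N - nu p)%R <= 2)%N.
Proof.
move=> p_pos.
have shift_p : nu p - b p = nu 1%N - b 1%N by apply: shift_const; rewrite p_pos leqnn.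
have -> : nu 1%N - nu p = b 1%N - b p.
  by rewrite -[nu p](subrK (b p)) shift_p; ring.
exact: leq_trans (norm1B_le _ _) (leq_add (norm1_b _) (norm1_b _)).
Qed.

End Chain.

Theorem lemma3p4 (R : realType) (d : nat) (om : 'I_d -> R) (gamma0 tau gamma : R)
  (hgamma0 : 0 < gamma0) (htau : d%:R - 1 < tau)
  (hdio : forall nu : 'I_d -> int, (exists k, nu k != 0) ->
            gamma0 * (norm1 nu)%:R `^ (- tau) < `|dotZ om nu|)
  (hgpos : 0 < gamma)
  (hgom : forall i : 'I_d, gamma < `|om i|)
  (hgdiff : forall i j : 'I_d, (i < j)%N -> gamma < `| `|om i| - `|om j| |)
  (p : nat) (hp : (2 <= p)%N)
  (nu : nat -> 'I_d -> int) (j : nat -> 'I_d)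
  (hstep : forall i : nat, (2 <= i <= p)%N -> (norm1 (subZ (nu i) (nu i.-1)) <= 2)%N)
  (hdelta : forall i : nat, (2 <= i <= p)%N ->
     delta om (j i) (dotZ om (nu i)) = delta om (j 1%N) (dotZ om (nu 1%N)))
  (hsmall : delta om (j 1%N) (dotZ om (nu 1%N)) <= gamma) :
  (norm1 (subZ (nu 1%N) (nu p)) <= 2)%N.
Proof.
have om_gap (i l : 'I_d) : i != l -> gamma < `| `|om i| - `|om l| |.
  by rewrite neq_ltn => /orP[il | li]; [apply: hgdiff | rewrite distrC; apply: hgdiff].
pose b i := basisZ (delta_sign om (j i) (dotZ om (nu i))) (j i).
apply: (chain_ends_close hgamma0 hdio hgom om_gap (b := b) _ hstep _ hsmall)
  => [i | i | ].
- by rewrite norm1_basisZ absz_delta_sign.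
- move=> /andP[i1 ip]; rewrite raddfB /= dotZ_basisZ -deltaE.
  have [i_gt1 | -> //] : (1 < i)%N \/ i = 1%N by lia.
  by apply: hdelta; rewrite i_gt1 ip.
- exact: ltnW hp.
Qed.
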